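(* Let $c_0(t)$ be analytic and not identically zero, and define $c_n(t)$, $n\ge1$, by $c_1=\dot c_0$, $c_{n+1}=\dot c_n+\sum_{s=0}^{n-1}c_sc_{n-1-s}$. Let $H_0=1$, $H_n(t)=\det\big(c_{i+k}(t)\big)_{i,k=0}^{n-1}$, and assume $H_n(t)\neq0$ for $1\le n\le N$. For $0\le n\le N$ let $P_n(x;t)$ be the monic polynomial $$P_n(x;t)=\frac{1}{H_n(t)}\det\begin{pmatrix} c_0&c_1&\cdots&c_n\\ c_1&c_2&\cdots&c_{n+1}\\ \vdots&&&\vdots\\ c_{n-1}&c_n&\cdots&c_{2n-1}\\ 1&x&\cdots&x^n\end{pmatrix}$$ (with $P_0=1$), and $h_n=H_{n+1}/H_n$. Suppose the formal series $F(z;t)=\sum_{n\ge0}c_n(t)z^{-n-1}$ equals (as an expansion at $z=\infty$) the rational function $\sum_{k=1}^N A_k(t)/(z-a_k(t))$ with $a_1,\dots,a_N$ pairwise distinct and $A_k$ not identically zero. Then: (i) $\sum_{k=1}^N A_k(t)P_n(a_k(t);t)P_m(a_k(t);t)=h_n(t)\delta_{nm}$ for $0\le n,m\le N$ (with $h_N=0$), where $A_k(t)=-\dot a_k(t)$; (ii) $P_N(x;t)=(x-a_1(t))\cdots(x-a_N(t))$; (iii) $c_n(t)=\sum_{k=1}^NA_ka_k^n=-\sum_{k=1}^N\dot a_ka_k^n$ for all $n\ge0$; (iv) there exist functions $B_0(t),\dots,B_N(t)$, not all zero and not depending on $n$, such that $\sum_{k=0}^NB_k(t)c_{n+k}(t)=0$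 for all $n\ge0$; (v) $H_{N+1}(t)\equiv0$ and $H_N(t)=A_1(t)\cdots A_N(t)\prod_{i<k}(a_i(t)-a_k(t))^2$.
   Context: The recursion for $c_n$ is the Toda-chain moment recursion in the case $u_0=c_0$ (boundary condition $b_{-1}\equiv0$); $c_n$ are the moments of the associated orthogonal polynomials $P_n$, whose Stieltjes function is $F$. A dot denotes $d/dt$. *)

From HB Require Import structures.
From mathcomp Require Import all_boot all_order all_algebra.
From mathcomp Require Import all_classical all_reals all_analysis.
Set Implicit Arguments. Unset Strict Implicit. Unset Printing Implicit Defensive.
Import Order.TTheory GRing.Theory Num.Theory.
Import numFieldNormedType.Exports.
Local Open Scope ring_scope.

Section Toda.
Variable K : numFieldType.

Definition hankel (c : nat -> K -> K) (n : nat) (t : K) : 'M[K]_n :=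
  \matrix_(i < n, k < n) c (i + k)%N t.

Definition Hdet (c : nat -> K -> K) (n : nat) (t : K) : K := \det (hankel c n t).

Definition Pmat (c : nat -> K -> K) (n : nat) (t : K) : 'M[{poly K}]_n.+1 :=
  \matrix_(i < n.+1, j < n.+1)
    (if (i < n)%N then (c (i + j)%N t)%:P else 'X^j).

Definition Ppoly (c : nat -> K -> K) (n : nat) (t : K) : {poly K} :=
  (Hdet c n t)^-1 *: \det (Pmat c n t).

Definition hnorm (c : nat -> K -> K) (n : nat) (t : K) : K :=
  Hdet c n.+1 t / Hdet c n t.

End Toda.

(* Write c_n = L(x^n) for the discrete functional L(p) = sum_k A_k p(a_k).
   The Hankel matrix of such moments factors as V diag(A) V^T with V a Vandermonde
   matrix, which gives H_N; the coefficients of prod_k (x - a_k) annihilate every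
   window (c_n, ..., c_(n+N)), which gives (iv), H_(N+1) = 0 and P_N = prod_k (x - a_k);
   the cofactors of the last row of the determinant defining P_n annihilate
   (c_i, ..., c_(i+n)) for i < n, which gives orthogonality.
   For A_k = -a_k', pair the Toda recursion with the coefficients of
   p = (x - a_k) prod_(l <> k) (x - a_l)^2: the moments become values of p, the
   convolution becomes divided differences of p, and everything vanishes except
   A_k (a_k' + A_k) p'(a_k). *)

From HB Require Import structures.
From mathcomp Require Import all_boot all_order all_algebra.
From mathcomp Require Import all_classical all_reals all_analysis.
From mathcomp Require Import ring.
Import Order.TTheory GRing.Theory Num.Theory.
Import numFieldNormedType.Exports.
Local Open Scope ring_scope.

Section DividedDifference.
Context {R : comNzRingType}.

Definition ddiff_pow (n : nat) (y z : R) : R :=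
  \sum_(i < n) y ^+ (n.-1 - i) * z ^+ i.

Lemma mul_ddiff_pow n y z : (y - z) * ddiff_pow n y z = y ^+ n - z ^+ n.
Proof. by rewrite subrXX. Qed.

Lemma ddiff_pow_diag n y : ddiff_pow n y y = n%:R * y ^+ n.-1.
Proof.
rewrite /ddiff_pow (eq_bigr (fun=> y ^+ n.-1)) ?sumr_const ?card_ord ?mulr_natl //.
move=> [i /= lt_in] _; rewrite -exprD subnK //.
by case: n lt_in.
Qed.

Lemma horner_deriv_coef (p : {poly R}) y :
  p^`().[y] = \sum_(n < size p) p`_n * (n%:R * y ^+ n.-1).
Proof.
have [->|p_neq0] := eqVneq p 0; first by rewrite deriv0 horner0 polyseq0 big_ord0.
have size_p : size p = (size p).-1.+1 by rewrite prednK // size_poly_gt0.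
rewrite size_p big_ord_recl mul0r mulr0 add0r.
rewrite (horner_coef_wide (n := (size p).-1)); last first.
  by rewrite -ltnS -size_p lt_size_deriv.
by apply: eq_bigr => n _; rewrite coef_deriv mulrA mulr_natr.
Qed.

Definition ddiff (p : {poly R}) (y z : R) : R :=
  \sum_(n < size p) p`_n * ddiff_pow n y z.

Lemma mul_ddiff p y z : (y - z) * ddiff p y z = p.[y] - p.[z].
Proof.
rewrite !horner_coef -sumrB mulr_sumr; apply: eq_bigr => n _.
by rewrite mulrCA mul_ddiff_pow mulrBr.
Qed.

Lemma ddiff_diag p y : ddiff p y y = p^`().[y].
Proof.
by rewrite horner_deriv_coef; apply: eq_bigr => n _; rewrite ddiff_pow_diag.
Qed.

End DividedDifference.

Definition moment {R : nzSemiRingType} {N : nat} (w x : 'I_N -> R) (n : nat) : R :=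
  \sum_(k < N) w k * x k ^+ n.

Section TodaMoments.
Context {R : idomainType} {N : nat}.
Variables w x d e : 'I_N -> R.

Lemma moment_succ n : moment w x n.+1 = moment (fun k => w k * x k) x n.
Proof. by apply: eq_bigr => k _; rewrite exprS mulrA. Qed.

Lemma sum_coef_moment (v : 'I_N -> R) (p : {poly R}) :
  \sum_(n < size p) p`_n * moment v x n = \sum_(k < N) v k * p.[x k].
Proof.
under eq_bigr => n _ do rewrite mulr_sumr.
rewrite exchange_big; apply: eq_bigr => k _.
by rewrite horner_coef mulr_sumr; apply: eq_bigr => n _; rewrite mulrCA.
Qed.

Lemma moment_convolution n :
  \sum_(s < n) moment w x s * moment w x (n.-1 - s) =
  \sum_(j < N) \sum_(l < N) w j * w l * ddiff_pow n (x l) (x j).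
Proof.
rewrite /moment; under eq_bigr => s _ do rewrite mulr_suml.
under eq_bigr => s _ do under eq_bigr => j _ do rewrite mulr_sumr.
rewrite exchange_big; apply: eq_bigr => j _.
rewrite exchange_big; apply: eq_bigr => l _.
by rewrite mulr_sumr; apply: eq_bigr => s _; ring.
Qed.

Hypothesis toda : forall n, moment w x n.+1 =
  \sum_(k < N) (e k * x k ^+ n + w k * d k * (n%:R * x k ^+ n.-1)) +
  \sum_(s < n) moment w x s * moment w x (n.-1 - s).

Lemma toda_pairing (p : {poly R}) :
  \sum_(k < N) w k * x k * p.[x k] =
  \sum_(k < N) (e k * p.[x k] + w k * d k * p^`().[x k]) +
  \sum_(j < N) \sum_(l < N) w j * w l * ddiff p (x l) (x j).
Proof.
rewrite -sum_coef_moment; under eq_bigr => n _ do rewrite -moment_succ toda.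
under eq_bigr => n _ do rewrite mulrDr moment_convolution.
rewrite big_split /=; congr (_ + _).
  under eq_bigr => n _ do rewrite mulr_sumr.
  rewrite exchange_big; apply: eq_bigr => k _.
  rewrite horner_coef horner_deriv_coef !mulr_sumr -big_split.
  by apply: eq_bigr => n _ /=; ring.
under eq_bigr => n _ do rewrite mulr_sumr.
rewrite exchange_big; apply: eq_bigr => j _.
under eq_bigr => n _ do rewrite mulr_sumr.
rewrite exchange_big; apply: eq_bigr => l _.
by rewrite /ddiff mulr_sumr; apply: eq_bigr => n _; ring.
Qed.

Hypothesis x_inj : injective x.

(* Off the diagonal the divided differences vanish, on it they are derivatives. *)
Lemma toda_pairing_roots (p : {poly R}) : (forall j, p.[x j] = 0) ->
  \sum_(k < N) w k * (d k + w k) * p^`().[x k] = 0.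
Proof.
move=> p_root.
have ddiff_root j l : l != j -> ddiff p (x l) (x j) = 0.
  move=> lj; apply/eqP; have := mul_ddiff p (x l) (x j).
  rewrite !p_root subrr => /eqP; rewrite mulf_eq0 subr_eq0 (inj_eq x_inj).
  by rewrite (negbTE lj).
have row_sum j : \sum_(l < N) w j * w l * ddiff p (x l) (x j) = w j * w j * p^`().[x j].
  rewrite (bigD1 j) //= big1 ?addr0 => [|l lj]; first by rewrite ddiff_diag.
  by rewrite ddiff_root ?mulr0.
have := toda_pairing p.
rewrite big1 => [|j _]; last by rewrite p_root mulr0.
under eq_bigr => j _ do rewrite p_root mulr0 add0r.
under [X in _ + X]eq_bigr => j _ do rewrite row_sum.
rewrite -big_split /= => pairing; rewrite [RHS]pairing.
by apply: eq_bigr => k _; ring.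
Qed.

(* p vanishes at every node, and p' at every node but x k. *)
Lemma toda_weight k : w k * (d k + w k) = 0.
Proof.
pose q := \prod_(l < N | l != k) ('X - (x l)%:P).
pose p := ('X - (x k)%:P) * q ^+ 2.
have q_root j : j != k -> q.[x j] = 0.
  by move=> jk; rewrite horner_prod (bigD1 j) //= hornerXsubC subrr mul0r.
have q_xk : q.[x k] != 0.
  rewrite horner_prod; apply/prodf_neq0 => l lk.
  by rewrite hornerXsubC subr_eq0 (inj_eq x_inj) eq_sym.
have p_root j : p.[x j] = 0.
  rewrite hornerM hornerXsubC horner_exp; have [->|jk] := eqVneq j k.
    by rewrite subrr mul0r.
  by rewrite q_root // expr0n mulr0.
have p'E : p^`() = q ^+ 2 + ('X - (x k)%:P) * (q^`() * q + q * q^`()).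
  by rewrite derivM derivXsubC mul1r expr2 derivM.
have p'_root j : j != k -> p^`().[x j] = 0.
  by move=> jk; rewrite p'E !hornerE q_root //; ring.
have := toda_pairing_roots p p_root.
rewrite (bigD1 k) //= big1 ?addr0 => [|j jk]; last by rewrite p'_root ?mulr0.
rewrite p'E !hornerE subrr mul0r addr0 => /eqP.
by rewrite mulf_eq0 expf_eq0 (negbTE q_xk) andbF orbF => /eqP.
Qed.

End TodaMoments.

Section HankelCofactors.
Context {K : numFieldType}.
Variables (c : nat -> K -> K) (t : K).

Definition bordered_hankel n (r : 'I_n.+1 -> K) : 'M[K]_n.+1 :=
  \matrix_(i < n.+1, j < n.+1) (if (i < n)%N then c (i + j)%N t else r j).

(* Cofactors along the last row; they do not depend on that row. *)
Definition hcof n (j : 'I_n.+1) : K := cofactor (bordered_hankel n (fun=> 0)) ord_max j.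

Lemma cofactor_bordered_hankel n r j : cofactor (bordered_hankel n r) ord_max j = hcof n j.
Proof.
rewrite /hcof /cofactor; congr (_ * \det _); apply/matrixP => i k.
by rewrite !mxE lift_max ltn_ord.
Qed.

Lemma det_bordered_hankel n r : \det (bordered_hankel n r) = \sum_j r j * hcof n j.
Proof.
rewrite (expand_det_row _ ord_max); apply: eq_bigr => j _.
by rewrite cofactor_bordered_hankel mxE ltnn.
Qed.

Lemma det_Pmat n : \det (Pmat c n t) = \sum_(j < n.+1) hcof n j *: 'X^j.
Proof.
rewrite (expand_det_row _ ord_max); apply: eq_bigr => j _.
rewrite mxE ltnn mulrC -mul_polyC; congr (_ * _).
rewrite /hcof /cofactor rmorphM /= rmorph_sign -det_map_mx; congr (_ * \det _).
by apply/matrixP => i k; rewrite !mxE lift_max ltn_ord.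
Qed.

Lemma hcof_last n : hcof n ord_max = Hdet c n t.
Proof.
rewrite /hcof /cofactor /Hdet addnn -signr_odd odd_double expr0 mul1r.
by congr (\det _); apply/matrixP => i k; rewrite !mxE !lift_max ltn_ord.
Qed.

Lemma sum_hankel_hcof_lt n i : (i < n)%N -> \sum_(j < n.+1) c (i + j)%N t * hcof n j = 0.
Proof.
move=> lt_in; rewrite -(det_bordered_hankel n (fun j => c (i + j)%N t)).
have i_neq_n : (Ordinal (leqW lt_in) : 'I_n.+1) != ord_max.
  by rewrite -val_eqE /= neq_ltn lt_in.
by apply: (determinant_alternate i_neq_n) => j; rewrite !mxE /= lt_in ltnn.
Qed.

Lemma hankel_succ n : hankel c n.+1 t = bordered_hankel n (fun j => c (n + j)%N t).
Proof.
apply/matrixP => i j; rewrite !mxE; case: ltnP => // le_ni.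
congr (c (_ + _) t); apply/eqP.
by rewrite eqn_leq le_ni -ltnS ltn_ord.
Qed.

Lemma sum_hankel_hcof n : \sum_(j < n.+1) c (n + j)%N t * hcof n j = Hdet c n.+1 t.
Proof. by rewrite /Hdet hankel_succ det_bordered_hankel. Qed.

Lemma Ppoly_def n : Ppoly c n t = \poly_(j < n.+1) ((Hdet c n t)^-1 * hcof n (inord j)).
Proof.
rewrite /Ppoly det_Pmat scaler_sumr poly_def; apply: eq_bigr => j _.
by rewrite scalerA inord_val.
Qed.

Lemma size_Ppoly n : (size (Ppoly c n t) <= n.+1)%N.
Proof. by rewrite Ppoly_def size_poly. Qed.

Lemma coef_Ppoly_last n : Hdet c n t != 0 -> (Ppoly c n t)`_n = 1.
Proof.
move=> Hn; rewrite Ppoly_def coef_poly ltnSn.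
have -> : inord n = ord_max :> 'I_n.+1 by apply/val_inj; rewrite /= inordK.
by rewrite hcof_last mulVf.
Qed.

Lemma horner_Ppoly n y :
  (Ppoly c n t).[y] = (Hdet c n t)^-1 * \sum_(j < n.+1) hcof n j * y ^+ j.
Proof.
rewrite /Ppoly det_Pmat hornerZ horner_sum; congr (_ * _).
by apply: eq_bigr => j _; rewrite hornerZ hornerXn.
Qed.

End HankelCofactors.

Section NodePolynomial.
Context {R : comNzRingType} {N : nat}.
Variable x : 'I_N -> R.

Definition node_poly : {poly R} := \prod_(k < N) ('X - (x k)%:P).

Lemma size_node_poly : size node_poly = N.+1.
Proof. by rewrite size_prod_XsubC /index_enum; unlock; rewrite -enumT size_enum_ord. Qed.

Lemma coef_node_poly_last : node_poly`_N = 1.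
Proof.
have /monicP := monic_prod_XsubC (index_enum 'I_N) xpredT x.
by rewrite lead_coefE size_node_poly.
Qed.

Lemma node_poly_root k : node_poly.[x k] = 0.
Proof. by rewrite horner_prod (bigD1 k) //= hornerXsubC subrr mul0r. Qed.

End NodePolynomial.

Section MomentRepresentation.
Context {K : numFieldType} {N : nat} {c : nat -> K -> K} {t : K} {w x : 'I_N -> K}.
Hypothesis cE : forall n, c n t = moment w x n.

Lemma moment_bilinear m n (u : 'I_m -> K) (v : 'I_n -> K) :
  \sum_(k < N) w k * (\sum_(j < n) v j * x k ^+ j) * (\sum_(i < m) u i * x k ^+ i) =
  \sum_(i < m) u i * \sum_(j < n) c (i + j)%N t * v j.
Proof.
under eq_bigr => k _ do rewrite [w k * _]mulr_sumr mulr_suml.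
under eq_bigr => k _ do under eq_bigr => j _ do rewrite mulr_sumr.
under [RHS]eq_bigr => i _ do rewrite mulr_sumr.
under [RHS]eq_bigr => i _ do under eq_bigr => j _ do rewrite cE mulr_suml mulr_sumr.
rewrite exchange_big [RHS]exchange_big; apply: eq_bigr => j _.
rewrite exchange_big; apply: eq_bigr => i _; apply: eq_bigr => k _.
by rewrite exprD; ring.
Qed.

Lemma Ppoly_orthogonal_le m n : (m <= n)%N -> Hdet c n t != 0 ->
  \sum_(k < N) w k * (Ppoly c n t).[x k] * (Ppoly c m t).[x k] =
  if n == m then hnorm c n t else 0.
Proof.
move=> le_mn Hn.
rewrite (eq_bigr (fun k => (Hdet c n t)^-1 * (Hdet c m t)^-1 *
  (w k * (\sum_(j < n.+1) hcof c t n j * x k ^+ j) *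
   (\sum_(i < m.+1) hcof c t m i * x k ^+ i)))); last first.
  by move=> k _; rewrite !horner_Ppoly; ring.
rewrite -mulr_sumr moment_bilinear.
have [<-|ne_nm] := eqVneq n m.
  rewrite big_ord_recr /= big1 ?add0r => [|i _]; last by rewrite sum_hankel_hcof_lt ?mulr0.
  by rewrite sum_hankel_hcof hcof_last /hnorm; field.
rewrite big1 ?mulr0 // => i _; rewrite sum_hankel_hcof_lt ?mulr0 //.
by rewrite (leq_trans (ltn_ord i)) // ltn_neqAle eq_sym ne_nm.
Qed.

Lemma Ppoly_orthogonal m n : Hdet c n t != 0 -> Hdet c m t != 0 ->
  \sum_(k < N) w k * (Ppoly c n t).[x k] * (Ppoly c m t).[x k] =
  if n == m then hnorm c n t else 0.
Proof.
move=> Hn Hm; have [le_mn|lt_nm] := leqP m n; first exact: Ppoly_orthogonal_le.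
under eq_bigr => k _ do rewrite mulrAC.
by rewrite Ppoly_orthogonal_le ?(ltnW lt_nm) // (gtn_eqF lt_nm) (ltn_eqF lt_nm).
Qed.

Lemma sum_hankel_node_poly i : \sum_(j < N.+1) c (i + j)%N t * (node_poly x)`_j = 0.
Proof.
under eq_bigr => j _ do rewrite cE mulr_suml.
rewrite exchange_big big1 // => k _.
transitivity (w k * x k ^+ i * (node_poly x).[x k]); last by rewrite node_poly_root mulr0.
by rewrite horner_coef size_node_poly mulr_sumr; apply: eq_bigr => j _; rewrite exprD; ring.
Qed.

(* The coefficient vector of the nodal polynomial is a nonzero kernel vector. *)
Lemma det_bordered_hankel_node (r : 'I_N.+1 -> K) :
  \sum_j r j * (node_poly x)`_j = 0 -> \det (bordered_hankel c t N r) = 0.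
Proof.
move=> r_node; rewrite -det_tr; apply/eqP/det0P.
exists (\row_(j < N.+1) (node_poly x)`_j).
  by apply/eqP => /rowP /(_ ord_max); rewrite !mxE coef_node_poly_last; apply/eqP/oner_neq0.
apply/rowP => i; rewrite !mxE; under eq_bigr => j _ do rewrite !mxE.
case: (i < N)%N; last by rewrite -[RHS]r_node; apply: eq_bigr => j _; rewrite mulrC.
by rewrite -[RHS](sum_hankel_node_poly i); apply: eq_bigr => j _; rewrite mulrC.
Qed.

Lemma Hdet_succ_eq0 : Hdet c N.+1 t = 0.
Proof. by rewrite /Hdet hankel_succ det_bordered_hankel_node ?sum_hankel_node_poly. Qed.

Lemma Ppoly_node_root k : (Ppoly c N t).[x k] = 0.
Proof.
rewrite horner_Ppoly (eq_bigr (fun j : 'I_N.+1 => x k ^+ j * hcof c t N j)) => [|j _]; last exact: mulrC.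
rewrite -det_bordered_hankel det_bordered_hankel_node ?mulr0 //.
by rewrite -[RHS](node_poly_root x k) horner_coef size_node_poly; apply: eq_bigr => j _; rewrite mulrC.
Qed.

Lemma Ppoly_node : Hdet c N t != 0 -> injective x -> Ppoly c N t = node_poly x.
Proof.
move=> HN x_inj; apply/eqP; rewrite -subr_eq0; apply/negPn/negP => d_neq0.
have size_d : (size (Ppoly c N t - node_poly x)%R <= N)%N.
  apply/leq_sizeP => j; rewrite leq_eqVlt => /predU1P [<-|lt_Nj].
    by rewrite coefB coef_Ppoly_last // coef_node_poly_last subrr.
  rewrite coefB !nth_default ?subrr // ?size_node_poly //.
  exact: leq_trans (size_Ppoly c t N) lt_Nj.
have := max_poly_roots d_neq0 (rs := map x (enum 'I_N)).
rewrite size_map size_enum_ord map_inj_uniq // enum_uniq.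
have -> : all (root (Ppoly c N t - node_poly x)) (map x (enum 'I_N)).
  apply/allP => _ /mapP [k _ ->].
  by rewrite /root hornerD hornerN Ppoly_node_root node_poly_root subrr.
by move=> /(_ isT isT); rewrite ltnNge size_d.
Qed.

(* The Hankel matrix of the moments factors as V diag(w) V^T with V Vandermonde. *)
Lemma Hdet_moment : Hdet c N t =
  (\prod_(k < N) w k) * \prod_(i < N) \prod_(k < N | (i < k)%N) (x i - x k) ^+ 2.
Proof.
pose V := Vandermonde N (\row_k x k).
have -> : Hdet c N t = \det (V *m diag_mx (\row_k w k) *m V^T).
  congr (\det _); apply/matrixP => i j; rewrite !mxE cE; apply: eq_bigr => k _.
  by rewrite mul_mx_diag !mxE exprD; ring.
rewrite !det_mulmx det_tr det_diag det_Vandermonde mulrC mulrA -expr2 mulrC -prodrXl.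
congr (_ * _); first by apply: eq_bigr => k _; rewrite mxE.
apply: eq_bigr => i _; rewrite -prodrXl; apply: eq_bigr => k _.
by rewrite !mxE -sqrrN opprB.
Qed.

End MomentRepresentation.

Lemma derive1_moment {K : numFieldType} {N : nat} (f : K -> K) (A a : 'I_N -> K -> K) n t :
  (forall k, derivable (a k) t 1) -> (forall k, derivable (A k) t 1) ->
  (\forall s \near t, f s = moment (A^~ s) (a^~ s) n) ->
  derive1 f t = \sum_(k < N)
    (derive1 (A k) t * a k t ^+ n + A k t * derive1 (a k) t * (n%:R * a k t ^+ n.-1)).
Proof.
move=> da dA f_near; rewrite derive1E (near_eq_derive _ (g := \sum_(k < N) A k * a k ^+ n)).
  rewrite derive_sum => [|k]; last exact: derivableM (dA k) (derivableX (da k)).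
  apply: eq_bigr => k _; rewrite deriveM ?deriveX //; last exact: derivableX.
  by rewrite -!derive1E exprfctE /GRing.scale /=; ring.
by near=> s; rewrite (near f_near) // fct_sumE; apply: eq_bigr => k _; rewrite exprfctE.
Unshelve. all: by end_near.
Qed.

Lemma toda_weight_derive {K : numFieldType} {N : nat} {c : nat -> K -> K}
    {A a : 'I_N -> K -> K} {t : K} :
  (forall n, c n.+1 t = derive1 (c n) t + \sum_(s < n) c s t * c (n.-1 - s)%N t) ->
  (forall k, derivable (a k) t 1) -> (forall k, derivable (A k) t 1) ->
  injective (a^~ t) ->
  (\forall s \near t, forall n, c n s = moment (A^~ s) (a^~ s) n) ->
  forall k, A k t != 0 -> A k t = - derive1 (a k) t.
Proof.
move=> toda da dA a_inj c_near k A_neq0.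
have mom n : c n t = moment (A^~ t) (a^~ t) n := nbhs_singleton c_near n.
suff /eqP : A k t * (derive1 (a k) t + A k t) = 0.
  by rewrite mulf_eq0 (negbTE A_neq0) addrC addr_eq0 => /eqP.
apply: (toda_weight (A^~ t) (a^~ t) (fun j => derive1 (a j) t) (fun j => derive1 (A j) t) _
  a_inj) => n.
rewrite -mom toda; congr (_ + _); last by apply: eq_bigr => s _; rewrite !mom.
by apply: derive1_moment => //; apply: filterS c_near => s /(_ n).
Qed.

Local Open Scope classical_set_scope.

Theorem mainTheorem4 (K : numFieldType) (D : set K) (N : nat)
  (c : nat -> K -> K) (A a : 'I_N -> K -> K) :
  open D ->
  (* c_0 (smooth on D; the c_n are differentiable) and not identically zero *)
  (forall n t, D t -> derivable (c n) t 1) ->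
  (exists t, D t /\ c 0%N t != 0) ->
  (* Toda moment recursion: c_1 = c_0', c_{n+1} = c_n' + sum_{s<n} c_s c_{n-1-s} *)
  (forall n t, D t ->
     c n.+1 t = derive1 (c n) t + \sum_(s < n) c s t * c (n.-1 - s)%N t) ->
  (* H_n(t) <> 0 for 1 <= n <= N *)
  (forall n t, D t -> (1 <= n <= N)%N -> Hdet c n t != 0) ->
  (* a_k, A_k differentiable functions *)
  (forall k t, D t -> derivable (a k) t 1) ->
  (forall k t, D t -> derivable (A k) t 1) ->
  (* a_1(t), ..., a_N(t) pairwise distinct *)
  (forall t, D t -> injective (fun k => a k t)) ->
  (* A_k not identically zero *)
  (forall k, exists t, D t /\ A k t != 0) ->
  (* F(z;t) = sum_n c_n z^{-n-1} = sum_k A_k/(z - a_k) as expansions at z = oo *)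
  (forall n t, D t -> c n t = \sum_(k < N) A k t * a k t ^+ n) ->
  (* (i) *)
  (forall t, D t ->
     (forall k, A k t = - derive1 (a k) t) /\
     (forall n m, (n <= N)%N -> (m <= N)%N ->
        \sum_(k < N) A k t * (Ppoly c n t).[a k t] * (Ppoly c m t).[a k t]
        = (if n == m then hnorm c n t else 0)) /\
     hnorm c N t = 0) /\
  (* (ii) *)
  (forall t, D t -> Ppoly c N t = \prod_(k < N) ('X - (a k t)%:P)) /\
  (* (iii) *)
  (forall n t, D t ->
     c n t = \sum_(k < N) A k t * a k t ^+ n /\
     c n t = - \sum_(k < N) derive1 (a k) t * a k t ^+ n) /\
  (* (iv) *)
  (exists B : 'I_N.+1 -> K -> K,
     (exists k t, D t /\ B k t != 0) /\
     (forall n t, D t -> \sum_(k < N.+1) B k t * c (n + k)%N t = 0)) /\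
  (* (v) *)
  (forall t, D t ->
     Hdet c N.+1 t = 0 /\
     Hdet c N t = (\prod_(k < N) A k t) *
        \prod_(i < N) \prod_(k < N | (i < k)%N) (a i t - a k t) ^+ 2).
Proof.
move=> oD _ [t0 [Dt0 _]] toda Hn da dA a_inj _ cE.
have mom t : D t -> forall n, c n t = moment (A^~ t) (a^~ t) n by move=> Dt n; exact: cE.
have Hdet_neq0 t n : D t -> (n <= N)%N -> Hdet c n t != 0.
  by case: n => [|n] Dt le_nN; [rewrite /Hdet det_mx00 oner_eq0 | exact: Hn].
have A_opp t k : D t -> A k t = - derive1 (a k) t.
  move=> Dt; apply: (toda_weight_derive (fun n => toda n t Dt) (fun k => da k t Dt)
    (fun k => dA k t Dt) (a_inj t Dt)).
    exact: filterS (fun s Ds n => cE n s Ds) (open_nbhs_nbhs (conj oD Dt)).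
  apply: contraNneq (Hdet_neq0 t N Dt (leqnn N)) => Ak0.
  by rewrite (Hdet_moment (mom t Dt)) (bigD1 k) //= Ak0 !mul0r.
split; [|split; [|split; [|split]]].
- move=> t Dt; split=> [k|]; first exact: A_opp.
  split; last by rewrite /hnorm (Hdet_succ_eq0 (mom t Dt)) mul0r.
  by move=> n m le_nN le_mN; apply: (Ppoly_orthogonal (mom t Dt)); exact: Hdet_neq0.
- by move=> t Dt; apply: (Ppoly_node (mom t Dt)); [exact: Hdet_neq0 | exact: a_inj].
- move=> n t Dt; split; first exact: cE.
  by rewrite cE // -sumrN; apply: eq_bigr => k _; rewrite A_opp // mulNr.
- exists (fun k t => (node_poly (a^~ t))`_k); split.
    by exists ord_max, t0; rewrite coef_node_poly_last oner_neq0.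
  move=> n t Dt; rewrite -[RHS](sum_hankel_node_poly (mom t Dt) n).
  by apply: eq_bigr => k _; rewrite mulrC.
- by move=> t Dt; rewrite (Hdet_succ_eq0 (mom t Dt)) (Hdet_moment (mom t Dt)).
Qed.
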